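(* Let $G$ be a connected simple graph with $n\ge 2$ vertices and $m$ edges. Then \[ \mathscr{K}_e(G)=\mathscr{K}_v(G)+2m-n . \]
   Context: Kemeny's constant of an irreducible finite Markov chain with transition matrix $P$ whose eigenvalues (with multiplicity) are $1=\rho_1,\rho_2,\dots,\rho_N$ (with $1$ a simple eigenvalue) is $\mathscr{K}(P)=\sum_{i=2}^{N}\frac{1}{1-\rho_i}$; equivalently $\mathscr{K}(P)=\sum_{j\ne i}\pi_j m_{ij}$ (independent of $i$), where $\pi$ is the stationary distribution and $m_{ij}$ the mean first passage time from state $i$ to state $j$. The vertex Kemeny's constant $\mathscr{K}_v(G)$ is Kemeny's constant of the simple random walk on the vertices of $G$, with transition matrix $P=D^{-1}A$ ($A$ the adjacency matrix, $D$ the diagonal degree matrix). The edge Kemeny's constant $\mathscr{K}_e(G)$ is Kemeny's constant of the simple random walk on the arcs of $G$: the states are the $2m$ arcs $(u,v)$ with $\{u,v\}\in E(G)$, and from arc $(u,v)$ the walk moves to arc $(v,w)$ with probability $1/\deg(v)$ for each neighbor $w$ of $v$ (including $w=u$), all other transition probabilities being $0$. *)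

From mathcomp Require Import all_boot all_order all_algebra all_field.
Set Implicit Arguments. Unset Strict Implicit. Unset Printing Implicit Defensive.
Import Order.TTheory GRing.Theory Num.Theory.
Local Open Scope ring_scope.

Definition eigenvalues (N : nat) (P : 'M[algC]_N) : seq algC :=
  projT1 (closed_field_poly_normal (char_poly P)).

(* Kemeny's constant: sum over the eigenvalues other than one copy of the
   (simple) eigenvalue 1 of 1/(1 - rho). *)
Definition kemeny (N : nat) (P : 'M[algC]_N) : algC :=
  \sum_(r <- rem 1 (eigenvalues P)) (1 - r)^-1.

Section Graph.
Variables (T : finType) (e : rel T).

Definition deg (v : T) : nat := #|[set w | e v w]|.

Definition nedges : nat :=
  #|[set E : {set T} | [exists u, exists v, e u v && (E == [set u; v])]]|.

Definition vertex_walk : 'M[algC]_#|T| :=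
  \matrix_(i, j) ((e (enum_val i) (enum_val j))%:R / (deg (enum_val i))%:R).

Definition arc := {p : T * T | e p.1 p.2}.

Definition arc_walk : 'M[algC]_#|{: arc}| :=
  \matrix_(i, j)
    (((val (enum_val i)).2 == (val (enum_val j)).1)%:R
       / (deg (val (enum_val i)).2)%:R).

Definition vertex_kemeny : algC := kemeny vertex_walk.
Definition edge_kemeny : algC := kemeny arc_walk.
End Graph.

(* The arc walk factors as P_e = H S and the vertex walk as P_v = S H, where
   H = head_mx (arcs x vertices) records the head of an arc and
   S = tail_walk_mx (vertices x arcs) sends u uniformly to the arcs leaving u.
   Sylvester's identity X^|V| chi_(HS) = X^|A| chi_(SH) shows that the two
   spectra differ only by |A| - |V| zeros, each contributing 1/(1 - 0) = 1 to
   Kemeny's constant, and |A| = 2m since each edge carries two opposite arcs. *)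

From mathcomp Require Import all_boot all_order all_algebra all_field.
Set Implicit Arguments. Unset Strict Implicit. Unset Printing Implicit Defensive.
Import GRing.Theory Num.Theory.
Local Open Scope ring_scope.

Lemma perm_rem (T : eqType) (x : T) s t :
  perm_eq s t -> perm_eq (rem x s) (rem x t).
Proof. by move=> st; apply/permP => P; rewrite !count_rem (permP st) (perm_mem st). Qed.

Lemma rem_cat (T : eqType) (x : T) s t :
  rem x (s ++ t) = if x \in s then rem x s ++ t else s ++ rem x t.
Proof.
elim: s => [|y s IHs] //=; rewrite inE eq_sym.
by case: eqP => //= _; rewrite IHs; case: ifP.
Qed.

Lemma eq_set2 (T : finType) (x y u v : T) :
  ([set x; y] == [set u; v]) = (x == u) && (y == v) || (x == v) && (y == u).
Proof.
apply/eqP/idP => [/setP xy_uv | /orP[] /andP[/eqP-> /eqP->] //]; last exact: setUC.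
move: (xy_uv x) (xy_uv y) (xy_uv u) (xy_uv v); rewrite !inE !eqxx !orbT /=.
move=> /esym/orP[]/eqP-> /esym/orP[]/eqP-> /orP[]/eqP uE /orP[]/eqP vE;
  by rewrite ?uE ?vE !eqxx ?orbT.
Qed.

Definition fun_mx (R : Type) (I J : finType) (f : I -> J -> R) : 'M[R]_(#|I|, #|J|) :=
  \matrix_(i, j) f (enum_val i) (enum_val j).

Lemma mul_fun_mx (R : pzSemiRingType) (I J K : finType)
    (f : I -> J -> R) (g : J -> K -> R) :
  fun_mx f *m fun_mx g = fun_mx (fun i k => \sum_j f i j * g j k).
Proof.
apply/matrixP => i k; rewrite !mxE [RHS](reindex _ (onW_bij _ (enum_val_bij J))).
by apply: eq_bigr => j _; rewrite !mxE.
Qed.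

Lemma sumr_delta (R : pzSemiRingType) (I : finType) (i0 : I) (F : I -> R) :
  \sum_i (i0 == i)%:R * F i = F i0.
Proof.
under eq_bigr do rewrite mulr_natl mulrb eq_sym.
by rewrite -big_mkcond big_pred1_eq.
Qed.

Lemma char_poly_mulmxC (R : comNzRingType) k n
    (A : 'M[R]_(k, n)) (B : 'M[R]_(n, k)) :
  'X^n * char_poly (A *m B) = 'X^k * char_poly (B *m A).
Proof.
rewrite /char_poly /char_poly_mx !map_mxM.
set a := map_mx polyC A; set b := map_mx polyC B.
pose M := block_mx ('X%:M : 'M_k) a b (1%:M : 'M_n).
have detM_left : \det (block_mx 1%:M (- a) 0 'X%:M *m M) = 'X^n * \det ('X%:M - a *m b).
  rewrite mulmx_block !mul1mx !mul0mx !mulmx1 !mul_scalar_mx !add0r mulNmx addrN.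
  by rewrite det_lblock det_scalar mulrC.
have detM_right : \det (block_mx 1%:M 0 (- b) 'X%:M *m M) = 'X^k * \det ('X%:M - b *m a).
  rewrite mulmx_block !mul1mx !mul0mx !mulmx1 !mul_scalar_mx !addr0.
  by rewrite mul_mx_scalar scalerN addNr mulNmx addrC det_ublock det_scalar.
rewrite -detM_left -detM_right !det_mulmx.
by rewrite det_ublock det_lblock !det1 !det_scalar !mul1r.
Qed.

Lemma char_poly_eigenvalues N (P : 'M[algC]_N) :
  char_poly P = \prod_(z <- eigenvalues P) ('X - z%:P).
Proof.
rewrite /eigenvalues; case: closed_field_poly_normal => r /= ->.
by rewrite (monicP (char_poly_monic P)) scale1r.
Qed.

Lemma eigenvalues_mulmxC k n (A : 'M[algC]_(k, n)) (B : 'M[algC]_(n, k)) :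
  perm_eq (eigenvalues (A *m B) ++ nseq n 0) (eigenvalues (B *m A) ++ nseq k 0).
Proof.
have Xn_prod m : 'X^m = \prod_(z <- nseq m (0 : algC)) ('X - z%:P).
  by rewrite big_nseq subr0; elim: m => //= m <-; rewrite exprS.
apply: prod_XsubC_eq; rewrite !big_cat /= -!Xn_prod -!char_poly_eigenvalues.
by rewrite mulrC char_poly_mulmxC mulrC.
Qed.

Definition kemeny_sum (F : fieldType) (s : seq F) : F := \sum_(r <- rem 1 s) (1 - r)^-1.

Lemma perm_kemeny_sum (F : fieldType) (s t : seq F) :
  perm_eq s t -> kemeny_sum s = kemeny_sum t.
Proof. by move=> st; apply/perm_big/perm_rem. Qed.

Lemma kemenyE N (P : 'M[algC]_N) : kemeny P = kemeny_sum (eigenvalues P).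
Proof. by []. Qed.

Lemma kemeny_sum_cat_nseq0 (F : fieldType) (s : seq F) n :
  kemeny_sum (s ++ nseq n 0) = kemeny_sum s + n%:R.
Proof.
have sum_nseq0 : \sum_(r <- nseq n (0 : F)) (1 - r)^-1 = n%:R.
  by rewrite big_nseq subr0 invr1; elim: n => //= n ->; rewrite -natr1 addrC.
have one_notin : 1 \notin nseq n (0 : F) by rewrite mem_nseq oner_eq0 andbF.
have rem_cat_nseq0 : rem 1 (s ++ nseq n 0) = rem 1 s ++ nseq n 0.
  by rewrite rem_cat (rem_id one_notin); case: ifPn => // /rem_id->.
by rewrite /kemeny_sum rem_cat_nseq0 big_cat sum_nseq0.
Qed.

Lemma kemeny_mulmxC k n (A : 'M[algC]_(k, n)) (B : 'M[algC]_(n, k)) :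
  kemeny (A *m B) + n%:R = kemeny (B *m A) + k%:R.
Proof.
rewrite !kemenyE -!kemeny_sum_cat_nseq0.
exact/perm_kemeny_sum/eigenvalues_mulmxC.
Qed.

Section ArcWalk.
Variables (T : finType) (e : rel T).

Definition arc_tail (a : arc e) : T := (val a).1.
Definition arc_head (a : arc e) : T := (val a).2.

Definition head_mx : 'M[algC]_(#|{: arc e}|, #|T|) :=
  fun_mx (fun a v => (arc_head a == v)%:R).
Definition tail_walk_mx : 'M[algC]_(#|T|, #|{: arc e}|) :=
  fun_mx (fun v a => (v == arc_tail a)%:R / (deg e v)%:R).

Lemma arc_walk_factor : arc_walk e = head_mx *m tail_walk_mx.
Proof. by rewrite mul_fun_mx; apply/matrixP => a b; rewrite !mxE sumr_delta. Qed.

Lemma vertex_walk_factor : vertex_walk e = tail_walk_mx *m head_mx.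
Proof.
rewrite mul_fun_mx; apply/matrixP => i j; rewrite !mxE.
set u := enum_val i; set w := enum_val j.
under eq_bigr do rewrite mulrAC -natrM.
rewrite -mulr_suml; congr (_ / _).
have [huw | nuw] := boolP (e u w).
  transitivity (\sum_a ((Sub (u, w) huw : arc e) == a)%:R * 1 : algC).
    by rewrite sumr_delta.
  apply: eq_bigr => -[[x y] exy] _; rewrite mulr1 mulnb -val_eqE /= xpair_eqE.
  by rewrite /arc_tail /arc_head /= (eq_sym w).
rewrite big1 // => -[[x y] /= exy] _; rewrite /arc_tail /arc_head /= mulnb.
by case: eqP => [ux|]; case: eqP => [yw|] //=; rewrite -ux yw (negbTE nuw) in exy.
Qed.

Hypotheses (e_sym : symmetric e) (e_irr : irreflexive e).

Definition arc_edge (a : arc e) : {set T} := [set arc_tail a; arc_head a].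

Lemma card_arc_edge_fiber u v :
  e u v -> #|[pred a | arc_edge a == [set u; v]]| = 2.
Proof.
move=> euv; have evu : e v u by rewrite e_sym.
have u_neq_v : u != v by apply: contraTneq euv => ->; rewrite e_irr.
rewrite (@eq_card _ _ (pred2 (Sub (u, v) euv) (Sub (v, u) evu))) => [|a].
  by rewrite card2 -val_eqE /= xpair_eqE (negbTE u_neq_v).
by case: a => [[x y] exy]; rewrite !inE /arc_edge eq_set2 -!val_eqE /= !xpair_eqE.
Qed.

Lemma card_arc : #|{: arc e}| = (2 * nedges e)%N.
Proof.
set edges := [set E : {set T} | [exists u, exists v, e u v && (E == [set u; v])]].
rewrite -sum1_card (partition_big arc_edge [in edges]) => [|a _]; last first.
  rewrite inE; apply/existsP; exists (arc_tail a); apply/existsP; exists (arc_head a).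
  by rewrite (valP a) eqxx.
rewrite /nedges -/edges mulnC -sum_nat_const; apply: eq_bigr => E.
rewrite inE => /existsP[u /existsP[v /andP[euv /eqP->]]].
by rewrite sum1_card card_arc_edge_fiber.
Qed.
End ArcWalk.

Theorem theorem2p9 (T : finType) (e : rel T)
    (e_sym : symmetric e) (e_irr : irreflexive e)
    (e_conn : forall x y : T, connect e x y)
    (hn : (2 <= #|T|)%N) :
  edge_kemeny e = vertex_kemeny e + (2 * nedges e)%:R - (#|T|)%:R.
Proof.
rewrite /edge_kemeny /vertex_kemeny arc_walk_factor vertex_walk_factor.
by rewrite -(card_arc e_sym e_irr) -kemeny_mulmxC addrK.
Qed.
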